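(* Let $m$ inputs have sizes $w_1,\dots,w_m$, each at most $\frac{q}{2}$, with $s=\sum_{i} w_i$, where $q$ is the reducer capacity. Consider the following algorithm: pack the inputs into bins of capacity $\frac{q}{2}$ using First-Fit Decreasing (or Best-Fit Decreasing); if $x$ bins are obtained, create $\frac{x(x-1)}{2}$ reducers, one for each unordered pair of distinct bins, and assign to it all inputs of both bins. The resulting A2A mapping schema uses at most $\frac{8s^2}{q^2}$ reducers and has communication cost at most $\frac{4s^2}{q}$.
   Context: An A2A mapping schema for inputs with sizes $w_1,\dots,w_m$ and reducer capacity $q$ is an assignment of the inputs to a collection of reducers (each input may go to several reducers) such that every reducer receives inputs of total size at most $q$ and every pair of distinct inputs is assigned together to at least one reducer. The communication cost is the sum over reducers of the total size of the inputs assigned to it. *)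

From mathcomp Require Import all_boot all_order all_algebra.
Set Implicit Arguments. Unset Strict Implicit. Unset Printing Implicit Defensive.
Import Order.TTheory GRing.Theory Num.Theory.
Local Open Scope ring_scope.

(* Inputs are indexed by 'I_m, with sizes w : 'I_m -> R.
   A bin (and a reducer) is a list of input indices. *)

Definition load (R : realFieldType) (m : nat) (w : 'I_m -> R)
  (b : seq 'I_m) : R := \sum_(i <- b) w i.

Fixpoint ff_insert (R : realFieldType) (m : nat) (w : 'I_m -> R) (c : R)
  (i : 'I_m) (B : seq (seq 'I_m)) : seq (seq 'I_m) :=
  match B with
  | [::] => [:: [:: i]]
  | b :: B' => if load w b + w i <= c then rcons b i :: B'
               else b :: ff_insert w c i B'
  end.

(* Best Fit: put input i into a bin where it fits whose current load is
   maximal (least remaining space), ties broken by lowest index; otherwise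
   open a new bin at the end. *)
Definition bf_insert (R : realFieldType) (m : nat) (w : 'I_m -> R) (c : R)
  (i : 'I_m) (B : seq (seq 'I_m)) : seq (seq 'I_m) :=
  let fits := [seq j <- iota 0 (size B) | load w (nth [::] B j) + w i <= c] in
  if fits is [::] then rcons B [:: i]
  else
    let best j := all (fun k => load w (nth [::] B k) <= load w (nth [::] B j)) fits in
    let j := nth 0%N fits (find best fits) in
    set_nth [::] B j (rcons (nth [::] B j) i).

Inductive fit_rule := FirstFit | BestFit.

(* With [ord] sorted by non-increasing
   size this is First-Fit Decreasing / Best-Fit Decreasing. *)
Definition pack (R : realFieldType) (m : nat) (rule : fit_rule) (c : R)
  (w : 'I_m -> R) (ord : seq 'I_m) : seq (seq 'I_m) :=
  foldl (fun B i => match rule with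
                    | FirstFit => ff_insert w c i B
                    | BestFit => bf_insert w c i B
                    end) [::] ord.

Definition pair_reducers (m : nat) (B : seq (seq 'I_m)) : seq (seq 'I_m) :=
  [seq nth [::] B p.1 ++ nth [::] B p.2 |
     p <- [seq p <- [seq (j, k) | j <- iota 0 (size B), k <- iota 0 (size B)]
          | (p.1 < p.2)%N]].

Definition comm_cost (R : realFieldType) (m : nat) (w : 'I_m -> R)
  (reducers : seq (seq 'I_m)) : R :=
  \sum_(r <- reducers) load w r.

From mathcomp Require Import all_boot all_order all_algebra.
From mathcomp Require Import lra.
Import Order.TTheory GRing.Theory Num.Theory.
Set Implicit Arguments. Unset Strict Implicit.
Local Open Scope ring_scope.

(* Any online fit rule leaves the bins pairwise "overfull": two bins never
   fit together into one bin, since otherwise the later input that opened the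
   second bin would have fitted into the first.  With x bins of capacity
   q/2 and total size s, summing this over the x(x-1)/2 pairs gives
   (x-1) s > (q/2) x(x-1)/2, i.e. q x < 4 s when x >= 2.  Every bin takes part
   in x-1 reducers, so the communication cost is exactly (x-1) s <= 4 s^2/q,
   and there are x(x-1)/2 <= x^2/2 <= 8 s^2/q^2 reducers. *)

Lemma sum_pairs (V : nmodType) (L : nat -> V) (x : nat) :
  \sum_(j < x) \sum_(k < x | (j < k)%N) (L j + L k) = (\sum_(j < x) L j) *+ x.-1.
Proof.
under eq_bigr => j _ do rewrite big_split; rewrite big_split /=.
rewrite [X in _ + X](exchange_big_dep xpredT) //= -big_split -sumrMnl.
apply: eq_bigr => j _; have -> : L j *+ x.-1 = \sum_(k < x | k != j) L j.
  by rewrite sumr_const cardC1 card_ord.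
rewrite [RHS](bigID (fun k : 'I_x => (j < k)%N)) /=.
congr (_ + _); apply: eq_bigl => k.
  by rewrite andb_idl // => lt_jk; rewrite neq_ltn lt_jk orbT.
by rewrite -leqNgt neq_ltn; case: ltngtP.
Qed.

Section Bins.

Variables (R : realFieldType) (m : nat) (w : 'I_m -> R).
Implicit Types (B : seq (seq 'I_m)) (c : R) (i : 'I_m).

Definition bin_load B j := load w (nth [::] B j).

Definition total_load B := \sum_(j < size B) bin_load B j.

Definition pairwise_overfull c B :=
  forall j k, (j < k < size B)%N -> c < bin_load B j + bin_load B k.

Lemma load_rcons b i : load w (rcons b i) = load w b + w i.
Proof. by rewrite /load big_rcons. Qed.

Lemma bin_load_set_rcons B j i k :
  bin_load (set_nth [::] B j (rcons (nth [::] B j) i)) k =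
  bin_load B k + (if k == j then w i else 0).
Proof.
rewrite /bin_load nth_set_nth /=; case: eqP => [->|_]; last by rewrite addr0.
by rewrite load_rcons.
Qed.

Lemma bin_load_rcons B b k :
  bin_load (rcons B b) k = if (k < size B)%N then bin_load B k
                           else if k == size B then load w b else 0.
Proof. by rewrite /bin_load nth_rcons; do !case: ifP => //; rewrite /load big_nil. Qed.

Variant insert_spec c i B : seq (seq 'I_m) -> Prop :=
  | InsertInto j of (j < size B)%N :
      insert_spec c i B (set_nth [::] B j (rcons (nth [::] B j) i))
  | InsertNew of (forall j, (j < size B)%N -> c < bin_load B j + w i) :
      insert_spec c i B (rcons B [:: i]).

Lemma ff_insertP c i B : insert_spec c i B (ff_insert w c i B).
Proof.
elim: B => [|b B IH] /=; first exact: InsertNew.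
case: ifP => [_ | /negbT]; first exact: (@InsertInto _ _ _ 0).
rewrite -ltNge => overflow; case: IH => [j lt_j | full].
  exact: (@InsertInto _ _ _ j.+1).
by apply: InsertNew => -[|j] //= lt_j; apply: full.
Qed.

Lemma bf_insertP c i B : insert_spec c i B (bf_insert w c i B).
Proof.
rewrite /bf_insert; set fits := [seq j <- _ | _].
have fits_lt j : j \in fits -> (j < size B)%N by rewrite mem_filter mem_iota => /and3P[].
case fitsE: fits => [|f fs].
  apply: InsertNew => j lt_j; rewrite ltNge; apply/negP => fit_j.
  suff : j \in fits by rewrite fitsE.
  by rewrite mem_filter mem_iota fit_j lt_j.
(* Whether or not [find] locates a best bin, the chosen index lies in [fits]
   or is the default 0, and both are valid bins since [fits] is nonempty. *)
apply: InsertInto; rewrite -fitsE; set k := find _ _.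
have [lt_k | ge_k] := ltnP k (size fits); first exact/fits_lt/mem_nth.
by rewrite nth_default //; apply: leq_ltn_trans (fits_lt f _); rewrite ?fitsE ?mem_head.
Qed.

Definition fit_insert rule c i B :=
  match rule with
  | FirstFit => ff_insert w c i B
  | BestFit => bf_insert w c i B
  end.

Lemma fit_insertP rule c i B : insert_spec c i B (fit_insert rule c i B).
Proof. by case: rule; [apply: ff_insertP | apply: bf_insertP]. Qed.

Hypothesis w_ge0 : forall i, 0 <= w i.

Lemma insert_overfull c i B B' :
  insert_spec c i B B' -> pairwise_overfull c B -> pairwise_overfull c B'.
Proof.
case=> [j lt_j | full] over k l /andP[lt_kl].
  rewrite size_set_nth (maxn_idPr lt_j) => lt_l.
  apply: lt_le_trans (over k l _) _; first by rewrite lt_kl.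
  by rewrite !bin_load_set_rcons lerD // lerDl; case: ifP.
rewrite size_rcons ltnS leq_eqVlt => /orP[/eqP l_eq | lt_l].
  rewrite !bin_load_rcons -l_eq lt_kl ltnn eqxx /load big_seq1.
  by apply: full; rewrite -l_eq.
by rewrite !bin_load_rcons lt_l (ltn_trans lt_kl lt_l); apply: over; rewrite lt_kl.
Qed.

Lemma insert_total c i B B' :
  insert_spec c i B B' -> total_load B' = total_load B + w i.
Proof.
case=> [j lt_j | _]; rewrite /total_load.
  rewrite size_set_nth (maxn_idPr lt_j).
  under eq_bigr => k _ do rewrite bin_load_set_rcons.
  by rewrite big_split /= -big_mkcond [X in _ + X](big_pred1 (Ordinal lt_j)).
rewrite size_rcons big_ord_recr /= bin_load_rcons ltnn eqxx /load big_seq1.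
by congr (_ + _); apply: eq_bigr => k _; rewrite bin_load_rcons ltn_ord.
Qed.

Lemma pack_overfull rule c ord : pairwise_overfull c (pack rule c w ord).
Proof.
rewrite /pack; have : pairwise_overfull c [::] by move=> j k /andP[].
elim: ord [::] => [|i ord IH] B //= over.
exact/IH/(insert_overfull (fit_insertP rule c i B)).
Qed.

Lemma pack_total rule c ord : total_load (pack rule c w ord) = \sum_(i <- ord) w i.
Proof.
suff foldl_total B : total_load (foldl (fun B i => fit_insert rule c i B) B ord) =
                     total_load B + \sum_(i <- ord) w i.
  by rewrite /pack foldl_total /total_load big_ord0 add0r.
elim: ord B => [|i ord IH] B /=; first by rewrite big_nil addr0.
by rewrite IH (insert_total (fit_insertP rule c i B)) big_cons addrA.
Qed.

Lemma overfull_size c B :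
  pairwise_overfull c B -> (1 < size B)%N -> c * (size B)%:R <= 2 * total_load B.
Proof.
move=> over gt1_B; set x := size B.
have pair_bound : \sum_(j < x) \sum_(k < x | (j < k)%N) (c / 2 + c / 2) <=
                  \sum_(j < x) \sum_(k < x | (j < k)%N) (bin_load B j + bin_load B k).
  apply: ler_sum => j _; apply: ler_sum => k lt_jk; rewrite -splitr.
  by apply/ltW/over; rewrite lt_jk ltn_ord.
rewrite (sum_pairs (fun=> c / 2)) sum_pairs sumr_const card_ord in pair_bound.
move: pair_bound; rewrite lerMn2r -subn1 subn_eq0 leqNgt gt1_B /=.
by rewrite -/(total_load B) -mulr_natl; lra.
Qed.

End Bins.

Section PairReducers.

Variables (m : nat) (B : seq (seq 'I_m)).

Lemma big_pair_reducers (V : nmodType) (F : seq 'I_m -> V) :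
  \sum_(r <- pair_reducers B) F r =
  \sum_(j < size B) \sum_(k < size B | (j < k)%N) F (nth [::] B j ++ nth [::] B k).
Proof.
rewrite /pair_reducers big_map big_filter big_mkcond big_allpairs /=.
have iotaE : iota 0 (size B) = index_iota 0 (size B) by rewrite /index_iota subn0.
rewrite iotaE big_mkord; apply: eq_bigr => j _.
by rewrite big_mkord [RHS]big_mkcond.
Qed.

Lemma double_size_pair_reducers : (size (pair_reducers B)).*2 = (size B * (size B).-1)%N.
Proof.
rewrite -[RHS]/(size B * (size B).-1) -sum1_size big_pair_reducers -mul2n big_distrr /=.
have := sum_pairs (fun _ => 1%N) (size B).
rewrite sumr_const card_ord natn -mulr_natr natn => <-.
by apply: eq_bigr => j _; rewrite big_distrr; apply: eq_bigr.
Qed.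

Lemma comm_cost_pair_reducers (R : realFieldType) (w : 'I_m -> R) :
  comm_cost w (pair_reducers B) = total_load w B *+ (size B).-1.
Proof.
rewrite /comm_cost big_pair_reducers -sum_pairs.
by apply: eq_bigr => j _; apply: eq_bigr => k _; rewrite /load big_cat.
Qed.

End PairReducers.

Lemma pair_schema_bounds (R : realFieldType) (q s : R) (x n : nat) :
  0 < q -> 0 <= s -> n.*2 = (x * x.-1)%N ->
  ((1 < x)%N -> q / 2 * x%:R <= 2 * s) ->
  n%:R <= 8 * s ^+ 2 / q ^+ 2 /\ s *+ x.-1 <= 4 * s ^+ 2 / q.
Proof.
move=> q_gt0 s_ge0 n2 x_bound.
have [le1_x | gt1_x] := leqP x 1.
  have pred_x0 : x.-1 = 0%N by case: x le1_x {n2 x_bound} => [|[]].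
  move/eqP: n2; rewrite pred_x0 muln0 double_eq0 => /eqP ->; rewrite mulr0n.
  by split; apply: divr_ge0; rewrite ?mulr_ge0 ?exprn_ge0 // ltW.
have {}x_bound := x_bound gt1_x.
have pred_x : x.-1%:R = x%:R - 1 :> R by rewrite -subn1 natrB // ltnW.
have {}n2 : n%:R * 2 = x%:R * (x%:R - 1) :> R.
  by rewrite -[2]/(2%:R : R) -natrM muln2 n2 natrM pred_x.
rewrite -[s *+ _]mulr_natr pred_x.
have x_ge2 : 2 <= x%:R :> R by rewrite (ler_nat R 2).
have qx_bound : q * x%:R <= 4 * s by lra.
split; rewrite ler_pdivlMr ?exprn_gt0 //.
  have : (q * x%:R) ^+ 2 <= (4 * s) ^+ 2 by rewrite lerXn2r // ?nnegrE ?mulr_ge0 // ltW.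
  nra.
nra.
Qed.

Theorem theorem5 (R : realFieldType) (m : nat) (w : 'I_m -> R) (q : R)
  (rule : fit_rule) (ord : seq 'I_m) :
  0 < q ->
  (forall i, 0 < w i) ->
  (forall i, w i <= q / 2) ->
  perm_eq ord (enum 'I_m) ->
  sorted (fun i j => w j <= w i) ord ->
  let s := \sum_(i < m) w i in
  let reducers := pair_reducers (pack rule (q / 2) w ord) in
  (size reducers)%:R <= 8 * s ^+ 2 / q ^+ 2 /\
  comm_cost w reducers <= 4 * s ^+ 2 / q.
Proof.
move=> q_gt0 w_gt0 _ ord_perm _ s reducers.
have w_ge0 i : 0 <= w i by apply: ltW.
rewrite /reducers comm_cost_pair_reducers; set B := pack rule (q / 2) w ord.
have total_s : total_load w B = s by rewrite pack_total (perm_big _ ord_perm) big_enum.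
rewrite total_s; apply: pair_schema_bounds => //.
- exact: sumr_ge0.
- exact: double_size_pair_reducers.
by move=> gt1_B; rewrite -total_s; apply: overfull_size gt1_B; apply: pack_overfull.
Qed.
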